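(* Let $S_{d,n}(x_1,\dots,x_n)=\sum_{1\le i_1\le\cdots\le i_d\le n}x_{i_1}\cdots x_{i_d}$ (complete homogeneous symmetric polynomial; $S_{0,n}=1$). For all $n\ge2$ and $d\ge1$, in the field of rational functions $\mathbb Q(x_1,\dots,x_n)$, $$S_{d,n}=\sum\frac{(-1)^{\alpha(i_2,\dots,i_n)+n}}{(x_2-x_{i_2})(x_3-x_{i_3})\cdots(x_n-x_{i_n})}\,(x_n^{d+n-1}-x_{i_n}^{d+n-1}),$$ the sum running over the $2^{n-2}$ tuples $(i_2,\dots,i_n)$ with $i_2=1$ and $i_{j+1}\in\{j,i_j\}$ for $2\le j\le n-1$, where $\alpha(i_2,\dots,i_n)$ is the number of $j$ with $2\le j\le n-1$ and $i_{j+1}\ne i_j$. *)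

From HB Require Import structures.
From mathcomp Require Import all_boot all_order all_algebra.
Set Implicit Arguments. Unset Strict Implicit. Unset Printing Implicit Defensive.
Import Order.TTheory GRing.Theory Num.Theory.
Local Open Scope ring_scope.

(* Variables are x 1, ..., x n (1-based), x : nat -> rat. *)

Definition S_dn (d n : nat) (x : nat -> rat) : rat :=
  \sum_(t : d.-tuple 'I_n | sorted leq (map val t)) \prod_(i <- t) x (val i).+1.

(* A tuple (i_2, ..., i_n) is encoded as f : 'I_(n.-1) -> 'I_n.+1 with
   f k = i_{k+2} (values are the 1-based indices).
   Admissibility: i_2 = 1 and i_{j+1} in {j, i_j} for 2 <= j <= n-1,
   i.e. for k.+1 < n.-1 : f (k+1) = k+2 or f (k+1) = f k. *)
Definition fval (n : nat) (f : {ffun 'I_(n.-1) -> 'I_n.+1}) (k : nat) : nat :=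
  match ltnP k n.-1 with
  | LtnNotGeq Hk => val (f (Ordinal Hk))
  | _ => 0%N
  end.

Definition admissible (n : nat) (f : {ffun 'I_(n.-1) -> 'I_n.+1}) : bool :=
  (fval f 0 == 1%N) &&
  [forall k : 'I_(n.-1), (k.+1 < n.-1)%N ==>
      ((fval f k.+1 == k.+2) || (fval f k.+1 == fval f k))].

Definition alpha (n : nat) (f : {ffun 'I_(n.-1) -> 'I_n.+1}) : nat :=
  #|[pred k : 'I_(n.-1) | (k.+1 < n.-1)%N && (fval f k.+1 != fval f k)]|.

Definition hrhs (d n : nat) (x : nat -> rat) : rat :=
  \sum_(f : {ffun 'I_(n.-1) -> 'I_n.+1} | admissible f)
    ((-1) ^+ (alpha f + n) /
       (\prod_(k < n.-1) (x k.+2 - x (fval f k))) *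
     (x n ^+ (d + n - 1) - x (fval f (n.-2)) ^+ (d + n - 1))).

From HB Require Import structures.
From mathcomp Require Import all_boot all_order all_algebra.
From mathcomp Require Import ring.
Set Implicit Arguments. Unset Strict Implicit. Unset Printing Implicit Defensive.
Import Order.TTheory GRing.Theory Num.Theory.
Local Open Scope ring_scope.

(* Both sides equal the divided difference of [y ^+ (d + n - 1)] at the nodes
   [x_1, ..., x_n].  On the left, [S_{e,k}] and the divided difference of
   [y ^+ (e + k - 1)] at [x_1, ..., x_k] satisfy the same recurrence
   [S_{e+1,k+1} = S_{e+1,k} + x_(k+1) S_{e,k+1}].  On the right, compute
   the divided difference by absorbing one node at a time:
   [phi[x_1, ..., x_(k+2)]] is the divided difference at [x_1, ..., x_(k+1)] of
   [y |-> (phi x_(k+2) - phi y) / (x_(k+2) - y)].  Distributing each quotient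
   over the difference in its numerator unfolds this into the sum over
   admissible tuples: when [x_(j+1)] is absorbed, [i_(j+1) = i_j] or
   [i_(j+1) = j] records which of the two terms is kept. *)

(* Nondecreasing sequences of length [e] with entries in [[0, j)], split
   according to whether the entry [j - 1] occurs. *)
Fixpoint nondecr_seqs (e j : nat) : seq (seq nat) :=
  match j with
  | 0 => if e is 0 then [:: [::]] else [::]
  | j'.+1 => (fix with_top e := match e with
      | 0 => [:: [::]]
      | e'.+1 => nondecr_seqs e j' ++ map (rcons^~ j') (with_top e')
      end) e
  end.

Lemma nondecr_seqs0 j : nondecr_seqs 0 j = [:: [::]].
Proof. by case: j. Qed.

Lemma nondecr_seqsS e j :
  nondecr_seqs e.+1 j.+1 = nondecr_seqs e.+1 j ++ map (rcons^~ j) (nondecr_seqs e j.+1).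
Proof. by []. Qed.

Lemma sorted_leq_rcons (s : seq nat) a :
  sorted leq (rcons s a) = sorted leq s && all (leq^~ a) s.
Proof.
rewrite -rev_sorted rev_rcons /= (path_sortedE (rev_trans leq_trans)) all_rev rev_sorted.
by rewrite andbC.
Qed.

Lemma mem_nondecr_seqs e j s :
  (s \in nondecr_seqs e j) = [&& size s == e, all (gtn j) s & sorted leq s].
Proof.
elim: j e s => [|j IHj] e s.
  by case: e => [|e]; case: s => [|a s] //=; rewrite andbF.
elim: e s => [|e IHe] s; first by rewrite nondecr_seqs0; case: s.
rewrite nondecr_seqsS mem_cat IHj; apply/idP/idP.
  case/orP => [/and3P[-> lt_s_j ->]|/mapP[t t_e ->]].
    by rewrite andbT; apply: sub_all lt_s_j => y; apply: ltnW.
  move: t_e; rewrite IHe => /and3P[t_size lt_t_j t_sorted].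
  by rewrite size_rcons eqSS all_rcons sorted_leq_rcons t_size t_sorted /= ltnSn lt_t_j.
case/lastP: s => [|t a] // /and3P[].
rewrite size_rcons eqSS all_rcons sorted_leq_rcons.
move=> t_size /andP[a_le_j lt_t_j] /andP[t_sorted le_t_a].
move: a_le_j => /=; rewrite ltnS leq_eqVlt => /predU1P[->|a_lt_j].
  apply/orP; right; apply: map_f.
  by rewrite IHe t_size lt_t_j t_sorted.
apply/orP; left.
rewrite all_rcons t_size t_sorted le_t_a /= a_lt_j !andbT.
by apply/allP => y y_t; apply: leq_ltn_trans a_lt_j; apply: (allP le_t_a).
Qed.

Lemma uniq_nondecr_seqs e j : uniq (nondecr_seqs e j).
Proof.
elim: j e => [|j IHj] e; first by case: e.
elim: e => [|e IHe]; first by rewrite nondecr_seqs0.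
rewrite nondecr_seqsS cat_uniq IHj map_inj_uniq ?IHe ?andbT; last first.
  by move=> s1 s2 /rcons_inj [].
apply/hasPn => _ /mapP[t _ ->].
by rewrite mem_nondecr_seqs all_rcons /= ltnn andbF.
Qed.

Section CompleteHomogeneous.

Variable R : comPzSemiRingType.

Definition complete_hom (x : nat -> R) (e j : nat) : R :=
  \sum_(s <- nondecr_seqs e j) \prod_(i <- s) x i.+1.

Lemma complete_hom0 x j : complete_hom x 0 j = 1.
Proof. by rewrite /complete_hom nondecr_seqs0 big_seq1 big_nil. Qed.

Lemma complete_homS x e j :
  complete_hom x e.+1 j.+1 = complete_hom x e.+1 j + x j.+1 * complete_hom x e j.+1.
Proof.
rewrite /complete_hom nondecr_seqsS big_cat big_map mulr_sumr.
by congr (_ + _); apply: eq_bigr => s _; rewrite big_rcons mulrC.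
Qed.

Lemma complete_hom1 x e : complete_hom x e 1 = x 1%N ^+ e.
Proof.
elim: e => [|e IHe]; first by rewrite complete_hom0.
by rewrite complete_homS IHe /complete_hom big_nil add0r exprS.
Qed.

End CompleteHomogeneous.

Lemma S_dn_complete_hom d j x : S_dn d j.+1 x = complete_hom x d j.+1.
Proof.
rewrite /S_dn /complete_hom.
pose seq_of (t : d.-tuple 'I_j.+1) := map val (tval t).
pose sorted_tuples := [seq t <- index_enum {: d.-tuple 'I_j.+1} | sorted leq (seq_of t)].
transitivity (\sum_(s <- map seq_of sorted_tuples) \prod_(i <- s) x i.+1).
  by rewrite big_map big_filter; apply: eq_bigr => t _; rewrite big_map.
apply: perm_big; apply: uniq_perm.
- rewrite map_inj_uniq ?filter_uniq ?index_enum_uniq // => t1 t2 eq_t.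
  exact/val_inj/(inj_map val_inj).
- exact: uniq_nondecr_seqs.
move=> s; rewrite mem_nondecr_seqs; apply/mapP/and3P.
  case=> t; rewrite mem_filter => /andP[t_sorted _] ->.
  rewrite size_map size_tuple t_sorted; split=> //.
  by apply/allP => _ /mapP[i _ ->] /=.
case=> /eqP s_size lt_s_j s_sorted.
have t_size : size (map (@inord j) s) == d by rewrite size_map s_size.
have val_t : seq_of (Tuple t_size) = s.
  by rewrite /seq_of /= -map_comp; apply: map_id_in => a /(allP lt_s_j) /inordK.
exists (Tuple t_size); last by rewrite val_t.
by rewrite mem_filter mem_index_enum val_t s_sorted.
Qed.

Section DividedDifferences.

Variables (F : fieldType) (x : nat -> F).

Fixpoint divdiff (k : nat) (phi : F -> F) : F :=
  match k with
  | 0 => phi (x 1%N)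
  | k'.+1 => divdiff k' (fun y => (phi (x k'.+2) - phi y) / (x k'.+2 - y))
  end.

Lemma eq_divdiff k : forall phi psi,
    (forall i, (0 < i)%N -> (i <= k.+1)%N -> phi (x i) = psi (x i)) ->
  divdiff k phi = divdiff k psi.
Proof.
elim: k => [|k IHk] phi psi eq_phi_psi /=; first exact: eq_phi_psi.
apply: IHk => i i_gt0 i_le.
by rewrite !eq_phi_psi //; apply: leqW.
Qed.

Lemma divdiff_comb k : forall a b phi psi,
  divdiff k (fun y => a * phi y + b * psi y) = a * divdiff k phi + b * divdiff k psi.
Proof.
elim: k => [|k IHk] a b phi psi //=.
rewrite -IHk; apply: eq_divdiff => i _ _.
by rewrite !mulrA -mulrDl; congr (_ * _); ring.
Qed.

Lemma divdiff_cst0 k : divdiff k (fun _ => 0) = 0.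
Proof.
elim: k => [|k IHk] //=.
by rewrite -[RHS]IHk; apply: eq_divdiff => i _ _; rewrite subrr mul0r.
Qed.

Variable n : nat.
Hypothesis x_inj : forall i j, (1 <= i)%N -> (i < j)%N -> (j <= n)%N -> x i != x j.

Lemma divdiff_powS k p : (k.+2 <= n)%N ->
  divdiff k.+1 (fun y => y ^+ p.+1) =
  divdiff k (fun y => y ^+ p) + x k.+2 * divdiff k.+1 (fun y => y ^+ p).
Proof.
move=> k_lt_n /=.
rewrite -[divdiff k (fun y => y ^+ p)]mul1r -divdiff_comb.
apply: eq_divdiff => i i_gt0 i_le.
have x_neq : x k.+2 - x i != 0.
  by rewrite subr_eq0 eq_sym x_inj // (leq_trans _ k_lt_n).
by rewrite !exprS; field.
Qed.

Lemma divdiff_pow_lt k p : (k < n)%N -> (p < k)%N -> divdiff k (fun y => y ^+ p) = 0.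
Proof.
elim: k p => [|k IHk] p // k_lt_n.
elim: p => [|p IHp] p_lt_k.
  by rewrite /= -[RHS](divdiff_cst0 k); apply: eq_divdiff => i _ _; rewrite subrr mul0r.
by rewrite divdiff_powS // IHk ?IHp ?mulr0 ?addr0 // ?(ltnW k_lt_n) ?(ltnW p_lt_k).
Qed.

Lemma divdiff_pow k e : (k < n)%N -> divdiff k (fun y => y ^+ (e + k)) = complete_hom x e k.+1.
Proof.
elim: k e => [|k IHk] e k_lt_n; first by rewrite addn0 complete_hom1.
have k_lt_n' := ltnW k_lt_n.
elim: e => [|e IHe].
  by rewrite add0n divdiff_powS // (IHk 0) // divdiff_pow_lt // mulr0 addr0 !complete_hom0.
by rewrite addSn divdiff_powS // IHe -addSnnS IHk // [RHS]complete_homS.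
Qed.

End DividedDifferences.

(* A tuple [(i_2, ..., i_(m+2))] is stored as the sequence [s] with
   [nth 0 s k = i_(k+2)]. *)
Definition adm_seq (m : nat) (s : seq nat) : bool :=
  [&& size s == m.+1, nth 0 s 0 == 1%N &
      all (fun k => (nth 0 s k.+1 == k.+2) || (nth 0 s k.+1 == nth 0 s k)) (iota 0 m)].

Fixpoint adm_seqs (m : nat) : seq (seq nat) :=
  match m with
  | 0 => [:: [:: 1%N]]
  | m'.+1 => map (fun s => rcons s (last 0 s)) (adm_seqs m') ++
             map (rcons^~ m'.+2) (adm_seqs m')
  end.

Lemma last_leq_all (s : seq nat) b : all (leq^~ b) s -> (last 0 s <= b)%N.
Proof. by move=> s_le; have := mem_last 0 s; rewrite inE => /predU1P[->|/(allP s_le)]. Qed.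

Lemma adm_seqs_shape m s :
  s \in adm_seqs m -> (size s == m.+1) && all (leq^~ m.+1) s.
Proof.
elim: m s => [|m IHm] s /=; first by rewrite inE => /eqP ->.
rewrite mem_cat => /orP[] /mapP[t /IHm /andP[t_size t_le] ->];
  rewrite size_rcons eqSS t_size all_rcons /=; last first.
  by rewrite leqnn; apply: sub_all t_le => y; apply: leqW.
rewrite (leqW (last_leq_all t_le)) (sub_all _ t_le) // => y; apply: leqW.
Qed.

Lemma last_adm_seqs m s : s \in adm_seqs m -> (last 0 s <= m.+1)%N.
Proof. by move/adm_seqs_shape=> /andP[_ /last_leq_all]. Qed.

Lemma adm_seq_rcons m t a : size t = m.+1 ->
  adm_seq m.+1 (rcons t a) = adm_seq m t && ((a == m.+2) || (a == last 0 t)).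
Proof.
move=> t_size; rewrite /adm_seq.
have -> : iota 0 m.+1 = rcons (iota 0 m) m by rewrite -addn1 iotaD cats1.
rewrite size_rcons t_size eqxx all_rcons !nth_rcons t_size ltnn eqxx ltnSn /=.
rewrite -nth_last t_size andbA andbAC; congr (_ && _ && _).
apply: eq_in_all => k; rewrite mem_iota add0n => /andP[_ k_lt_m].
by rewrite !nth_rcons t_size ltnS k_lt_m ltnS ltnW.
Qed.

Lemma mem_adm_seqs m s : (s \in adm_seqs m) = adm_seq m s.
Proof.
elim: m s => [|m IHm] s.
  by rewrite inE /adm_seq; case: s => [|a [|b s]] //=; rewrite eqseq_cons andbF.
rewrite /= mem_cat; apply/idP/idP.
  case/orP => /mapP[t t_adm ->]; have /andP[/eqP t_size _] := adm_seqs_shape t_adm;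
    by rewrite adm_seq_rcons // -IHm t_adm eqxx ?orbT.
case/lastP: s => [|t a]; first by rewrite /adm_seq.
have [t_size|] := eqVneq (size t) m.+1; last first.
  by rewrite /adm_seq size_rcons eqSS => /negbTE ->.
rewrite adm_seq_rcons // -IHm => /andP[t_adm /orP[/eqP->|/eqP->]].
  by apply/orP; right; apply: map_f.
by apply/orP; left; apply: map_f.
Qed.

Lemma uniq_adm_seqs m : uniq (adm_seqs m).
Proof.
elim: m => [|m IHm] //=.
rewrite cat_uniq !map_inj_uniq ?IHm ?andbT //; try by move=> s1 s2 /rcons_inj [].
apply/hasPn => _ /mapP[t t_adm ->]; apply/negP => /mapP[t' t'_adm /rcons_inj [_ eq_last]].
by have := last_adm_seqs t'_adm; rewrite -eq_last ltnn.
Qed.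

Section AdmissibleSums.

Variables (F : fieldType) (x : nat -> F).

Definition nchanges (s : seq nat) : nat :=
  \sum_(j < (size s).-1) (nth 0 s j.+1 != nth 0 s j).

Definition adm_denom (s : seq nat) : F := \prod_(j < size s) (x j.+2 - x (nth 0 s j)).

Definition adm_sum (m : nat) (Psi : nat -> F) : F :=
  \sum_(s <- adm_seqs m) (-1) ^+ nchanges s / adm_denom s * Psi (last 0 s).

Lemma nchanges_rcons t a : (0 < size t)%N ->
  nchanges (rcons t a) = (nchanges t + (a != last 0 t))%N.
Proof.
rewrite /nchanges size_rcons /=; case t_size: (size t) => [//|k] _ /=.
rewrite big_ord_recr /= !nth_rcons t_size ltnn eqxx ltnSn -nth_last t_size /=.
congr (_ + _)%N; apply: eq_bigr => j _ /=.
by rewrite !nth_rcons t_size ltnS (ltn_ord j) ltnS (ltnW (ltn_ord j)).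
Qed.

Lemma adm_denom_rcons t a : adm_denom (rcons t a) = adm_denom t * (x (size t).+2 - x a).
Proof.
rewrite /adm_denom size_rcons big_ord_recr /= nth_rcons ltnn eqxx; congr (_ * _).
by apply: eq_bigr => j _ /=; rewrite nth_rcons (ltn_ord j).
Qed.

Lemma eq_adm_sum m Psi Psi' : Psi =1 Psi' -> adm_sum m Psi = adm_sum m Psi'.
Proof. by move=> eq_Psi; apply: eq_bigr => s _; rewrite eq_Psi. Qed.

Lemma adm_sumN m Psi : adm_sum m (fun i => - Psi i) = - adm_sum m Psi.
Proof. by rewrite /adm_sum -sumrN; apply: eq_bigr => s _; rewrite mulrN. Qed.

(* Each admissible sequence of length [m + 2] extends one of length [m + 1]
   either by repeating its last entry, which keeps the sign, or by the new
   entry [m + 2], which flips it. *)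
Lemma adm_sumS m Psi : adm_sum m.+1 Psi =
  adm_sum m (fun i => Psi i / (x m.+3 - x i) - Psi m.+2 / (x m.+3 - x m.+2)).
Proof.
rewrite /adm_sum [adm_seqs _.+1]/= big_cat !big_map -[LHS]big_split.
apply: eq_big_seq => s s_adm.
have /andP[/eqP s_size _] := adm_seqs_shape s_adm.
have last_neq : m.+2 != last 0 s.
  by apply: contraTneq (last_adm_seqs s_adm) => <-; rewrite ltnn.
rewrite !nchanges_rcons ?s_size // !adm_denom_rcons !last_rcons s_size eqxx last_neq.
by rewrite addn0 addn1 exprS !invfM /=; ring.
Qed.

Lemma adm_sum_divdiff m phi :
  adm_sum m (fun i => phi (x m.+2) - phi (x i)) = (-1) ^+ m * divdiff x m.+1 phi.
Proof.
elim: m phi => [|m IHm] phi.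
  rewrite /adm_sum big_seq1 /nchanges /adm_denom big_ord0 big_ord1 /=.
  by rewrite expr0 !mul1r mulrC.
rewrite adm_sumS.
pose psi y := (phi (x m.+3) - phi y) / (x m.+3 - y).
rewrite (@eq_adm_sum _ _ (fun i => - (psi (x m.+2) - psi (x i)))); last first.
  by move=> i; rewrite opprB.
by rewrite adm_sumN IHm exprS mulN1r mulNr.
Qed.

End AdmissibleSums.

Section FfunEncoding.

Variable m : nat.
Implicit Type f : {ffun 'I_m.+1 -> 'I_m.+3}.

Definition seq_of_ffun f : seq nat := map (@fval m.+2 f) (iota 0 m.+1).

Lemma fval_ord f (k : 'I_m.+1) : @fval m.+2 f k = f k.
Proof.
rewrite /fval; case: ltnP => [k_lt|]; last by rewrite leqNgt ltn_ord.
by congr (nat_of_ord (f _)); apply: val_inj.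
Qed.

Lemma size_seq_of_ffun f : size (seq_of_ffun f) = m.+1.
Proof. by rewrite size_map size_iota. Qed.

Lemma nth_seq_of_ffun f k : (k < m.+1)%N -> nth 0 (seq_of_ffun f) k = @fval m.+2 f k.
Proof. by move=> k_lt; rewrite (nth_map 0) ?size_iota // nth_iota. Qed.

Lemma seq_of_ffun_inj : injective seq_of_ffun.
Proof.
move=> f g eq_fg; apply/ffunP => k; apply: val_inj => /=.
by rewrite -(fval_ord f) -(fval_ord g) -!nth_seq_of_ffun // eq_fg.
Qed.

Lemma alpha_nchanges f : @alpha m.+2 f = nchanges (seq_of_ffun f).
Proof.
rewrite /alpha /nchanges size_seq_of_ffun.
under eq_bigr => j _ do
  rewrite (@nth_seq_of_ffun f j.+1 (ltn_ord j)) (@nth_seq_of_ffun f j (ltnW (ltn_ord j))).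
rewrite -sum1_card big_mkcond big_ord_recr /= inE ltnn addn0.
by apply: eq_bigr => j _; rewrite inE /= ltnS ltn_ord; case: (_ != _).
Qed.

Lemma adm_denom_seq_of_ffun (F : fieldType) (x : nat -> F) f :
  adm_denom x (seq_of_ffun f) = \prod_(k < m.+1) (x k.+2 - x (@fval m.+2 f k)).
Proof.
by rewrite /adm_denom size_seq_of_ffun; apply: eq_bigr => j _; rewrite nth_seq_of_ffun.
Qed.

Lemma last_seq_of_ffun f : last 0 (seq_of_ffun f) = @fval m.+2 f m.
Proof. by rewrite -nth_last size_seq_of_ffun nth_seq_of_ffun. Qed.

Lemma map_seq_of_ffun_admissible :
  perm_eq (map seq_of_ffun [seq f <- index_enum _ | @admissible m.+2 f]) (adm_seqs m).
Proof.
apply: uniq_perm => [||s].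
- by rewrite map_inj_uniq ?filter_uniq ?index_enum_uniq //; apply: seq_of_ffun_inj.
- exact: uniq_adm_seqs.
rewrite mem_adm_seqs; apply/mapP/idP.
  case=> f; rewrite mem_filter => /andP[/andP[f_0 f_step] _] ->.
  rewrite /adm_seq size_seq_of_ffun eqxx nth_seq_of_ffun // f_0 !andTb.
  apply/allP => k; rewrite mem_iota add0n => /andP[_ k_lt_m].
  rewrite (@nth_seq_of_ffun f k.+1 k_lt_m) (@nth_seq_of_ffun f k (ltnW k_lt_m)).
  by have := forallP f_step (@Ordinal m.+1 k (ltnW k_lt_m)); rewrite /= ltnS k_lt_m.
move=> s_adm; have /adm_seqs_shape/andP[/eqP s_size s_le] : s \in adm_seqs m.
  by rewrite mem_adm_seqs.
pose f := [ffun k : 'I_m.+1 => (inord (nth 0 s k) : 'I_m.+3)].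
have fval_f k : (k < m.+1)%N -> @fval m.+2 f k = nth 0 s k.
  move=> k_lt; rewrite -[k]/(nat_of_ord (Ordinal k_lt)) fval_ord ffunE inordK //=.
  by rewrite ltnS leqW // (allP s_le) // mem_nth // s_size.
have -> : s = seq_of_ffun f.
  apply: (@eq_from_nth _ 0); first by rewrite size_seq_of_ffun.
  by move=> i; rewrite s_size => i_lt; rewrite nth_seq_of_ffun // fval_f.
exists f => //; rewrite mem_filter mem_index_enum andbT.
move: s_adm; rewrite /adm_seq /admissible => /and3P[_ s_0 s_step].
rewrite fval_f // s_0; apply/forallP => k; apply/implyP => k_lt.
by rewrite !fval_f //; apply: (allP s_step); rewrite mem_iota add0n -ltnS.
Qed.

End FfunEncoding.

Lemma hrhs_adm_sum d m x : hrhs d m.+2 x =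
  (-1) ^+ m.+2 * adm_sum x m (fun i => x m.+2 ^+ (d + m.+1) - x i ^+ (d + m.+1)).
Proof.
rewrite /hrhs /adm_sum mulr_sumr -big_filter -(perm_big _ (map_seq_of_ffun_admissible m)).
rewrite big_map; apply: eq_bigr => f _.
rewrite exprD alpha_nchanges adm_denom_seq_of_ffun last_seq_of_ffun addnS subSS subn0.
by ring.
Qed.

Theorem mainTheorem3 (n d : nat) (hn : (2 <= n)%N) (hd : (1 <= d)%N)
  (x : nat -> rat)
  (hx : forall i j : nat, (1 <= i)%N -> (i < j)%N -> (j <= n)%N -> x i != x j) :
  S_dn d n x = hrhs d n x.
Proof.
case: n hn hx => [|[|m]] // _ x_inj.
rewrite S_dn_complete_hom -(divdiff_pow x_inj) // hrhs_adm_sum.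
rewrite (adm_sum_divdiff x m (fun y => y ^+ (d + m.+1))).
by rewrite !exprS !mulN1r opprK signrMK.
Qed.
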